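(* Fix $\mathcal D>0$ and let $J(N,\widetilde D)$ be a twice continuously differentiable real function of $N>0$, $\widetilde D>0$. For $T>0$ consider $$\min_{N>0,\ \widetilde D\ge 2\mathcal D} J(N,\widetilde D)\quad\text{subject to}\quad N\widetilde D=T .$$ Let $I\subseteq(0,\infty)$ be an open interval and assume that for every $T\in I$ this problem has a unique minimizer $(N^\star(T),\widetilde D^\star(T))$ with $\widetilde D^\star(T)>2\mathcal D$, and that $T\mapsto (N^\star(T),\widetilde D^\star(T))$ is continuous on $I$. Writing $\mu=\log N$, $\nu=\log\widetilde D$ and $J(\mu,\nu):=J(e^\mu,e^\nu)$, assume that at every such optimum $(\mu^\star(T),\nu^\star(T))$: (1) $\partial^2 J/\partial\mu\partial\nu\le 0$; (2) $\partial^2J/\partial\mu^2>0$; (3) $\partial^2J/\partial\nu^2>0$. Then for all $T_1<T_2$ in $I$: $N^\star(T_2)>N^\star(T_1)$ and $\widetilde D^\star(T_2)>\widetilde D^\star(T_1)$.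
   Context: In the paper's application, $N$ is the model size, $D$ the number of training tokens, $\widetilde D=6D+2\mathcal D$ the effective data with $\mathcal D$ the test-set size, and $J$ the two-part code length; the claim is purely analytic. *)

From Stdlib Require Import Reals.
From Coquelicot Require Import Coquelicot.
Open Scope R_scope.

Definition cont2 (F : R -> R -> R) (x y : R) : Prop :=
  continuous (fun p : R * R => F (fst p) (snd p)) (x, y).

Definition C2_on_pos_quadrant (J : R -> R -> R) : Prop :=
  exists J1 J2 J11 J12 J21 J22 : R -> R -> R,
    forall x y, 0 < x -> 0 < y ->
      is_derive (fun t => J t y) x (J1 x y) /\
      is_derive (fun t => J x t) y (J2 x y) /\
      is_derive (fun t => J1 t y) x (J11 x y) /\
      is_derive (fun t => J1 x t) y (J12 x y) /\
      is_derive (fun t => J2 t y) x (J21 x y) /\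
      is_derive (fun t => J2 x t) y (J22 x y) /\
      cont2 J x y /\ cont2 J1 x y /\ cont2 J2 x y /\
      cont2 J11 x y /\ cont2 J12 x y /\ cont2 J21 x y /\ cont2 J22 x y.

Definition is_constrained_min (J : R -> R -> R) (Dc T N Dt : R) : Prop :=
  0 < N /\ 2 * Dc <= Dt /\ N * Dt = T /\
  forall N' Dt', 0 < N' -> 2 * Dc <= Dt' -> N' * Dt' = T -> J N Dt <= J N' Dt'.

Definition Jlog (J : R -> R -> R) (mu nu : R) : R := J (exp mu) (exp nu).

Definition in_open_interval (a b : Rbar) (T : R) : Prop :=
  Rbar_lt a T /\ Rbar_lt T b.

(** In log coordinates [mu = ln N], [nu = ln Dt] the constraint [N * Dt = T]
    becomes the line [mu + nu = ln T], and an optimum with [Dt > 2 Dc] is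
    interior, so it is a zero of the slope [G = dJ/dmu - dJ/dnu] of [J] along
    that line.  The second-order conditions, together with the symmetry of
    the mixed partials, make [G] strictly increasing in [mu] and strictly
    decreasing in [nu] near each optimum.  Two nearby zeros of [G] with
    [mu1 + nu1 < mu2 + nu2] therefore satisfy [mu1 < mu2] and [nu1 < nu2]:
    if one coordinate did not increase, the other would, and both moves would
    change [G] in the same direction.  By continuity of the optimal path this
    gives local monotonicity in [T], and a supremum argument makes it global. *)

From Stdlib Require Import Reals Lra Classical_Prop.
From Coquelicot Require Import Coquelicot.
Open Scope R_scope.

Definition locally_increasing_on (P : R -> Prop) (f : R -> R) : Prop :=
  forall x, P x -> exists d, 0 < d /\
    forall u v, x - d < u -> u < v -> v < x + d -> P u -> P v -> f u < f v.

Lemma locally_increasing_on_lt (P : R -> Prop) (f : R -> R) lo hi :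
  locally_increasing_on P f -> (forall x, lo <= x <= hi -> P x) -> lo < hi ->
  f lo < f hi.
Proof.
  intros Hloc HP Hlohi.
  set (E := fun s => lo <= s <= hi /\ forall u, lo < u <= s -> f lo < f u).
  assert (Elo : E lo) by (split; [lra | intros u Hu; lra]).
  destruct (completeness E) as [c [Hub Hlub]].
  { exists hi; intros s [Hs _]; lra. }
  { exists lo; exact Elo. }
  assert (Hc : lo <= c <= hi).
  { split; [apply Hub, Elo | apply Hlub; intros s [Hs _]; lra]. }
  destruct (Hloc c (HP c Hc)) as [d [Hd Hincr]].
  assert (Hnear : exists s, E s /\ c - d < s).
  { apply NNPP; intros Hfar.
    assert (c <= c - d); [|lra].
    apply Hlub; intros s Es; apply Rnot_lt_le; intros Hs; apply Hfar; eauto. }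
  destruct Hnear as [s [[Hs Hlos] Hcs]].
  assert (Hsc : s <= c) by (apply Hub; split; assumption).
  set (w := Rmin (c + d / 2) hi).
  assert (Hw : w <= c + d / 2 /\ w <= hi) by (split; [apply Rmin_l | apply Rmin_r]).
  assert (Ew : E w).
  { split; [split; [apply Rmin_glb|]; lra|].
    intros u Hu.
    destruct (Rle_lt_dec u s) as [Hus | Hsu]; [apply Hlos; lra|].
    assert (f s < f u) by (apply Hincr; try apply HP; lra).
    destruct (Req_dec s lo) as [-> | Hslo]; [lra|].
    assert (f lo < f s) by (apply Hlos; lra).
    lra. }
  assert (Hwhi : w = hi).
  { assert (Hwc : w <= c) by (apply Hub, Ew).
    unfold w in *; destruct (Rle_lt_dec (c + d / 2) hi).
    - rewrite Rmin_left in Hwc by lra; lra.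
    - apply Rmin_right; lra. }
  destruct Ew as [_ Ew]; apply Ew; lra.
Qed.

Lemma ball_increasing_of_derive (g dg : R -> R) x0 e :
  (forall x, is_derive g x (dg x)) -> (forall x, Rabs (x - x0) < e -> 0 < dg x) ->
  forall x y, Rabs (x - x0) < e -> Rabs (y - x0) < e -> x < y -> g x < g y.
Proof.
  intros Hg Hdg x y Hx Hy Hxy.
  apply Rabs_def2 in Hx; apply Rabs_def2 in Hy.
  apply (incr_function g (x0 - e) (x0 + e) dg); simpl; try lra.
  - intros z _ _; apply Hg.
  - intros z Hz1 Hz2; apply Hdg, Rabs_def1; simpl in *; lra.
Qed.

Lemma continuous_pos_box (f : R -> R -> R) x y :
  continuous (fun p : R * R => f (fst p) (snd p)) (x, y) -> 0 < f x y ->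
  exists e, 0 < e /\ forall u v, Rabs (u - x) < e -> Rabs (v - y) < e -> 0 < f u v.
Proof.
  intros Hc Hpos.
  apply continuity_2d_pt_filterlim in Hc.
  destruct (Hc (mkposreal _ Hpos)) as [e He].
  exists e; split; [apply cond_pos|].
  intros u v Hu Hv; specialize (He u v Hu Hv); simpl in He.
  apply Rabs_def2 in He; lra.
Qed.

Lemma level_set_comonotone (G : R -> R -> R) (Pm Pn : R -> Prop) :
  (forall n x y, Pn n -> Pm x -> Pm y -> x < y -> G x n < G y n) ->
  (forall m x y, Pm m -> Pn x -> Pn y -> x < y -> G m y < G m x) ->
  forall m1 n1 m2 n2, Pm m1 -> Pn n1 -> Pm m2 -> Pn n2 ->
  G m1 n1 = G m2 n2 -> m1 + n1 < m2 + n2 -> m1 < m2 /\ n1 < n2.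
Proof.
  intros Hm Hn m1 n1 m2 n2 Pm1 Pn1 Pm2 Pn2 Heq Hsum; split.
  - apply Rnot_le_lt; intros Hle.
    assert (G m2 n2 < G m2 n1) by (apply Hn; auto; lra).
    assert (G m2 n1 <= G m1 n1).
    { destruct (Req_dec m2 m1) as [-> | Hne]; [lra|].
      apply Rlt_le, Hm; auto; lra. }
    lra.
  - apply Rnot_le_lt; intros Hle.
    assert (G m1 n1 < G m2 n1) by (apply Hm; auto; lra).
    assert (G m2 n1 <= G m2 n2).
    { destruct (Req_dec n2 n1) as [-> | Hne]; [lra|].
      apply Rlt_le, Hn; auto; lra. }
    lra.
Qed.

Lemma continuous_Rabs_delta (f : R -> R) x e :
  continuous f x -> 0 < e ->
  exists d, 0 < d /\ forall y, Rabs (y - x) < d -> Rabs (f y - f x) < e.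
Proof.
  intros Hf He.
  destruct (proj1 (filterlim_locally f (f x)) Hf (mkposreal _ He)) as [d Hd].
  exists d; split; [apply cond_pos | intros y Hy; apply (Hd y Hy)].
Qed.

Lemma continuous_R2_mult (f g : R * R -> R) p :
  continuous f p -> continuous g p -> continuous (fun q => f q * g q) p.
Proof. apply (continuous_mult f g). Qed.

Lemma continuous_R2_plus (f g : R * R -> R) p :
  continuous f p -> continuous g p -> continuous (fun q => f q + g q) p.
Proof. apply (continuous_plus f g). Qed.

Lemma continuous_exp_fst m n : continuous (fun p : R * R => exp (fst p)) (m, n).
Proof. exact (continuous_comp fst exp (m, n) (continuous_fst m n) (continuous_exp _)). Qed.

Lemma continuous_exp_snd m n : continuous (fun p : R * R => exp (snd p)) (m, n).
Proof. exact (continuous_comp snd exp (m, n) (continuous_snd m n) (continuous_exp _)). Qed.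

Lemma continuous_cont2_exp (F : R -> R -> R) m n :
  cont2 F (exp m) (exp n) ->
  continuous (fun p : R * R => F (exp (fst p)) (exp (snd p))) (m, n).
Proof.
  intros HF.
  apply (continuous_comp_2 (fun p : R * R => exp (fst p)) (fun p => exp (snd p)) F).
  - apply continuous_exp_fst.
  - apply continuous_exp_snd.
  - exact HF.
Qed.

Lemma in_open_interval_pos (a b : Rbar) T :
  Rbar_le 0 a -> in_open_interval a b T -> 0 < T.
Proof. intros Ha [HaT _]; destruct a; simpl in *; try contradiction; lra. Qed.

Lemma in_open_interval_between (a b : Rbar) T1 T2 T :
  in_open_interval a b T1 -> in_open_interval a b T2 -> T1 <= T <= T2 ->
  in_open_interval a b T.
Proof.
  intros [HaT1 _] [_ HT2b] [HT1 HT2]; split.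
  - apply (Rbar_lt_le_trans a T1 T); auto.
  - apply (Rbar_le_lt_trans T T2 b); auto.
Qed.

Definition C2_partials (J J1 J2 J11 J12 J21 J22 : R -> R -> R) : Prop :=
  forall x y, 0 < x -> 0 < y ->
    is_derive (fun t => J t y) x (J1 x y) /\
    is_derive (fun t => J x t) y (J2 x y) /\
    is_derive (fun t => J1 t y) x (J11 x y) /\
    is_derive (fun t => J1 x t) y (J12 x y) /\
    is_derive (fun t => J2 t y) x (J21 x y) /\
    is_derive (fun t => J2 x t) y (J22 x y) /\
    cont2 J x y /\ cont2 J1 x y /\ cont2 J2 x y /\
    cont2 J11 x y /\ cont2 J12 x y /\ cont2 J21 x y /\ cont2 J22 x y.

(* Partial derivatives of [Jlog J] in terms of those of [J]; [Jlog_mn] is the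
   derivative of [Jlog_m] in the second variable, [Jlog_nm] that of [Jlog_n]
   in the first. *)
Definition Jlog_m (J1 : R -> R -> R) m n := exp m * J1 (exp m) (exp n).
Definition Jlog_n (J2 : R -> R -> R) m n := exp n * J2 (exp m) (exp n).
Definition Jlog_mm (J1 J11 : R -> R -> R) m n :=
  exp m * J1 (exp m) (exp n) + exp m * (exp m * J11 (exp m) (exp n)).
Definition Jlog_mn (J12 : R -> R -> R) m n := exp m * (exp n * J12 (exp m) (exp n)).
Definition Jlog_nm (J21 : R -> R -> R) m n := exp n * (exp m * J21 (exp m) (exp n)).
Definition Jlog_nn (J2 J22 : R -> R -> R) m n :=
  exp n * J2 (exp m) (exp n) + exp n * (exp n * J22 (exp m) (exp n)).

(* Derivative of [Jlog J] along the direction [(1, -1)] of the constraint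
   lines [mu + nu = ln T]. *)
Definition constraint_slope (J1 J2 : R -> R -> R) m n := Jlog_m J1 m n - Jlog_n J2 m n.

Section LogCoordinates.

Context {J J1 J2 J11 J12 J21 J22 : R -> R -> R}
  (HC : C2_partials J J1 J2 J11 J12 J21 J22).

Let HCexp m n := HC (exp m) (exp n) (exp_pos m) (exp_pos n).

Lemma is_derive_Jlog_m m n : is_derive (fun z => Jlog J z n) m (Jlog_m J1 m n).
Proof.
  apply (is_derive_comp (fun t => J t (exp n)) exp); [apply HCexp | apply is_derive_exp].
Qed.

Lemma is_derive_Jlog_n m n : is_derive (fun z => Jlog J m z) n (Jlog_n J2 m n).
Proof.
  apply (is_derive_comp (fun t => J (exp m) t) exp); [apply HCexp | apply is_derive_exp].
Qed.

Lemma is_derive_Jlog_mm m n : is_derive (fun z => Jlog_m J1 z n) m (Jlog_mm J1 J11 m n).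
Proof.
  apply (is_derive_mult exp (fun z => J1 (exp z) (exp n))).
  - apply is_derive_exp.
  - apply (is_derive_comp (fun t => J1 t (exp n)) exp); [apply HCexp | apply is_derive_exp].
  - intros; apply Rmult_comm.
Qed.

Lemma is_derive_Jlog_mn m n : is_derive (fun z => Jlog_m J1 m z) n (Jlog_mn J12 m n).
Proof.
  apply is_derive_scal.
  apply (is_derive_comp (fun t => J1 (exp m) t) exp); [apply HCexp | apply is_derive_exp].
Qed.

Lemma is_derive_Jlog_nm m n : is_derive (fun z => Jlog_n J2 z n) m (Jlog_nm J21 m n).
Proof.
  apply is_derive_scal.
  apply (is_derive_comp (fun t => J2 t (exp n)) exp); [apply HCexp | apply is_derive_exp].
Qed.

Lemma is_derive_Jlog_nn m n : is_derive (fun z => Jlog_n J2 m z) n (Jlog_nn J2 J22 m n).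
Proof.
  apply (is_derive_mult exp (fun z => J2 (exp m) (exp z))).
  - apply is_derive_exp.
  - apply (is_derive_comp (fun t => J2 (exp m) t) exp); [apply HCexp | apply is_derive_exp].
  - intros; apply Rmult_comm.
Qed.

Local Ltac continuous_log :=
  repeat (apply continuous_R2_mult || apply continuous_R2_plus);
  first [ apply continuous_exp_fst | apply continuous_exp_snd
        | apply continuous_cont2_exp; apply HCexp ].

Lemma continuous_Jlog_m m n :
  continuous (fun p : R * R => Jlog_m J1 (fst p) (snd p)) (m, n).
Proof. unfold Jlog_m; continuous_log. Qed.

Lemma continuous_Jlog_mm m n :
  continuous (fun p : R * R => Jlog_mm J1 J11 (fst p) (snd p)) (m, n).
Proof. unfold Jlog_mm; continuous_log. Qed.

Lemma continuous_Jlog_mn m n :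
  continuous (fun p : R * R => Jlog_mn J12 (fst p) (snd p)) (m, n).
Proof. unfold Jlog_mn; continuous_log. Qed.

Lemma continuous_Jlog_nm m n :
  continuous (fun p : R * R => Jlog_nm J21 (fst p) (snd p)) (m, n).
Proof. unfold Jlog_nm; continuous_log. Qed.

Lemma continuous_Jlog_nn m n :
  continuous (fun p : R * R => Jlog_nn J2 J22 (fst p) (snd p)) (m, n).
Proof. unfold Jlog_nn; continuous_log. Qed.

Lemma Derive_Jlog_m m n : Derive (fun t => Jlog J t n) m = Jlog_m J1 m n.
Proof. apply is_derive_unique, is_derive_Jlog_m. Qed.

Lemma Derive_Jlog_n m n : Derive (fun t => Jlog J m t) n = Jlog_n J2 m n.
Proof. apply is_derive_unique, is_derive_Jlog_n. Qed.

Lemma Derive2_Jlog_mm m n :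
  Derive (fun z => Derive (fun t => Jlog J t n) z) m = Jlog_mm J1 J11 m n.
Proof.
  rewrite (Derive_ext _ (fun z => Jlog_m J1 z n)) by (intros; apply Derive_Jlog_m).
  apply is_derive_unique, is_derive_Jlog_mm.
Qed.

Lemma Derive2_Jlog_mn m n :
  Derive (fun z => Derive (fun t => Jlog J t z) m) n = Jlog_mn J12 m n.
Proof.
  rewrite (Derive_ext _ (fun z => Jlog_m J1 m z)) by (intros; apply Derive_Jlog_m).
  apply is_derive_unique, is_derive_Jlog_mn.
Qed.

Lemma Derive2_Jlog_nm m n :
  Derive (fun z => Derive (fun t => Jlog J z t) n) m = Jlog_nm J21 m n.
Proof.
  rewrite (Derive_ext _ (fun z => Jlog_n J2 z n)) by (intros; apply Derive_Jlog_n).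
  apply is_derive_unique, is_derive_Jlog_nm.
Qed.

Lemma Derive2_Jlog_nn m n :
  Derive (fun z => Derive (fun t => Jlog J m t) z) n = Jlog_nn J2 J22 m n.
Proof.
  rewrite (Derive_ext _ (fun z => Jlog_n J2 m z)) by (intros; apply Derive_Jlog_n).
  apply is_derive_unique, is_derive_Jlog_nn.
Qed.

Lemma Jlog_mn_nm m n : Jlog_mn J12 m n = Jlog_nm J21 m n.
Proof.
  rewrite <- Derive2_Jlog_mn, <- Derive2_Jlog_nm.
  symmetry; apply Schwarz.
  - apply locally_2d_forall; intros u v; repeat split.
    + eexists; apply is_derive_Jlog_m.
    + eexists; apply is_derive_Jlog_n.
    + apply (ex_derive_ext (fun z => Jlog_n J2 z v));
        [intros; symmetry; apply Derive_Jlog_n | eexists; apply is_derive_Jlog_nm].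
    + apply (ex_derive_ext (fun z => Jlog_m J1 u z));
        [intros; symmetry; apply Derive_Jlog_m | eexists; apply is_derive_Jlog_mn].
  - apply (continuity_2d_pt_ext_loc (Jlog_nm J21)).
    + apply locally_2d_forall; intros; symmetry; apply Derive2_Jlog_nm.
    + apply continuity_2d_pt_filterlim, continuous_Jlog_nm.
  - apply (continuity_2d_pt_ext_loc (Jlog_mn J12)).
    + apply locally_2d_forall; intros; symmetry; apply Derive2_Jlog_mn.
    + apply continuity_2d_pt_filterlim, continuous_Jlog_mn.
Qed.

Lemma differentiable_Jlog m n :
  differentiable_pt_lim (Jlog J) m n (Jlog_m J1 m n) (Jlog_n J2 m n).
Proof.
  apply filterdiff_differentiable_pt_lim.
  apply (is_derive_filterdiff (Jlog J) m n (Jlog_m J1)).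
  - exists (mkposreal _ Rlt_0_1); intros; apply is_derive_Jlog_m.
  - apply is_derive_Jlog_n.
  - apply continuous_Jlog_m.
Qed.

Lemma constrained_min_slope_0 Dc T N Dt :
  0 < Dc -> is_constrained_min J Dc T N Dt -> 2 * Dc < Dt ->
  constraint_slope J1 J2 (ln N) (ln Dt) = 0.
Proof.
  intros HDc [HN [_ [HNDt Hmin]]] HDt.
  set (m0 := ln N); set (n0 := ln Dt).
  assert (Hn0 : ln T - m0 = n0) by (unfold m0, n0; rewrite <- HNDt, ln_mult; lra).
  set (phi := fun m => Jlog J m (ln T - m)).
  assert (Hphi : derivable_pt_lim phi m0
                   (Jlog_m J1 m0 n0 * 1 + Jlog_n J2 m0 n0 * (0 - 1))).
  { apply (derivable_pt_lim_comp_2d (Jlog J) (fun m => m) (fun m => ln T - m)).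
    - rewrite Hn0; apply differentiable_Jlog.
    - apply derivable_pt_lim_id.
    - apply derivable_pt_lim_minus;
        [apply derivable_pt_lim_const | apply derivable_pt_lim_id]. }
  assert (Hroom : ln (2 * Dc) < n0) by (apply ln_increasing; lra).
  (* on this interval, [exp (ln T - m) > 2 Dc], so [phi] is minimal at [m0] *)
  assert (Hcrit := deriv_minimum phi (m0 - 1) (m0 + (n0 - ln (2 * Dc))) m0
                     (exist _ _ Hphi)).
  simpl in Hcrit.
  assert (Hfoc : Jlog_m J1 m0 n0 * 1 + Jlog_n J2 m0 n0 * (0 - 1) = 0).
  { apply Hcrit; [lra | lra |].
    intros m _ Hm; unfold phi, Jlog; rewrite Hn0; unfold m0, n0.
    rewrite !exp_ln by lra.
    apply Hmin.
    - apply exp_pos.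
    - rewrite <- (exp_ln (2 * Dc)) by lra; apply Rlt_le, exp_increasing; lra.
    - rewrite <- exp_plus; replace (m + (ln T - m)) with (ln T) by ring.
      apply exp_ln; rewrite <- HNDt; apply Rmult_lt_0_compat; lra. }
  unfold constraint_slope; fold m0 n0; lra.
Qed.

Lemma constraint_slope_box m0 n0 :
  Jlog_nm J21 m0 n0 <= 0 -> 0 < Jlog_mm J1 J11 m0 n0 -> 0 < Jlog_nn J2 J22 m0 n0 ->
  exists e, 0 < e /\
    (forall n x y, Rabs (n - n0) < e -> Rabs (x - m0) < e -> Rabs (y - m0) < e ->
       x < y -> constraint_slope J1 J2 x n < constraint_slope J1 J2 y n) /\
    (forall m x y, Rabs (m - m0) < e -> Rabs (x - n0) < e -> Rabs (y - n0) < e ->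
       x < y -> constraint_slope J1 J2 m y < constraint_slope J1 J2 m x).
Proof.
  intros Hnm Hmm Hnn.
  assert (Hmn : Jlog_mn J12 m0 n0 <= 0) by (rewrite Jlog_mn_nm; exact Hnm).
  destruct (continuous_pos_box (fun u v => Jlog_mm J1 J11 u v - Jlog_nm J21 u v) m0 n0)
    as [e1 [He1 Hbox1]]; [| lra |].
  { apply (continuous_minus (fun p : R * R => Jlog_mm J1 J11 (fst p) (snd p))
                            (fun p => Jlog_nm J21 (fst p) (snd p)));
      [apply continuous_Jlog_mm | apply continuous_Jlog_nm]. }
  destruct (continuous_pos_box (fun u v => Jlog_nn J2 J22 u v - Jlog_mn J12 u v) m0 n0)
    as [e2 [He2 Hbox2]]; [| lra |].
  { apply (continuous_minus (fun p : R * R => Jlog_nn J2 J22 (fst p) (snd p))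
                            (fun p => Jlog_mn J12 (fst p) (snd p)));
      [apply continuous_Jlog_nn | apply continuous_Jlog_mn]. }
  set (e := Rmin e1 e2).
  assert (He : e <= e1 /\ e <= e2) by (split; [apply Rmin_l | apply Rmin_r]).
  exists e; split; [apply Rmin_glb_lt; assumption | split].
  - intros n x y Hn.
    apply (ball_increasing_of_derive (fun z => constraint_slope J1 J2 z n)
             (fun z => Jlog_mm J1 J11 z n - Jlog_nm J21 z n) m0 e).
    + intros z; apply (is_derive_minus (fun z => Jlog_m J1 z n) (fun z => Jlog_n J2 z n));
        [apply is_derive_Jlog_mm | apply is_derive_Jlog_nm].
    + intros z Hz; apply Hbox1; lra.
  - intros m x y Hm Hx Hy Hxy.
    enough (- constraint_slope J1 J2 m x < - constraint_slope J1 J2 m y) by lra.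
    apply (ball_increasing_of_derive (fun z => - constraint_slope J1 J2 m z)
             (fun z => Jlog_nn J2 J22 m z - Jlog_mn J12 m z) n0 e); try assumption.
    + intros z.
      apply (is_derive_ext (fun z => Jlog_n J2 m z - Jlog_m J1 m z));
        [intros; symmetry; apply Ropp_minus_distr |].
      apply (is_derive_minus (fun z => Jlog_n J2 m z) (fun z => Jlog_m J1 m z));
        [apply is_derive_Jlog_nn | apply is_derive_Jlog_mn].
    + intros z Hz; apply Hbox2; lra.
Qed.

Section OptimalPath.

Variables (Dc : R) (a b : Rbar) (Nstar Dstar : R -> R).
Hypothesis HDc : 0 < Dc.
Hypothesis Ha : Rbar_le 0 a.
Hypothesis Hopt : forall T, in_open_interval a b T ->
  is_constrained_min J Dc T (Nstar T) (Dstar T) /\ 2 * Dc < Dstar T.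
Hypothesis Hcont : forall T, in_open_interval a b T ->
  continuous Nstar T /\ continuous Dstar T.
Hypothesis Hsoc : forall T, in_open_interval a b T ->
  Jlog_nm J21 (ln (Nstar T)) (ln (Dstar T)) <= 0 /\
  0 < Jlog_mm J1 J11 (ln (Nstar T)) (ln (Dstar T)) /\
  0 < Jlog_nn J2 J22 (ln (Nstar T)) (ln (Dstar T)).

Lemma optimal_path_ln_sum T :
  in_open_interval a b T -> ln (Nstar T) + ln (Dstar T) = ln T.
Proof.
  intros HT; destruct (Hopt T HT) as [[HN [_ [HNDt _]]] HDt].
  rewrite <- ln_mult, HNDt by lra; reflexivity.
Qed.

Lemma optimal_path_locally_comonotone T0 :
  in_open_interval a b T0 -> exists d, 0 < d /\
    forall u v, T0 - d < u -> u < v -> v < T0 + d ->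
      in_open_interval a b u -> in_open_interval a b v ->
      ln (Nstar u) < ln (Nstar v) /\ ln (Dstar u) < ln (Dstar v).
Proof.
  intros HT0.
  destruct (Hsoc T0 HT0) as (Hnm & Hmm & Hnn).
  destruct (constraint_slope_box _ _ Hnm Hmm Hnn) as (e & He & Hincr & Hdecr).
  destruct (Hopt T0 HT0) as [[HN0 _] HDt0].
  destruct (Hcont T0 HT0) as [HcN HcD].
  destruct (continuous_Rabs_delta (fun T => ln (Nstar T)) T0 e) as [d1 [Hd1 HN]];
    [apply (continuous_comp Nstar ln), continuous_ln; assumption | assumption |].
  destruct (continuous_Rabs_delta (fun T => ln (Dstar T)) T0 e) as [d2 [Hd2 HD]];
    [apply (continuous_comp Dstar ln), continuous_ln; [assumption | lra] | assumption |].
  set (d := Rmin d1 d2).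
  assert (Hd : d <= d1 /\ d <= d2) by (split; [apply Rmin_l | apply Rmin_r]).
  exists d; split; [apply Rmin_glb_lt; assumption|].
  intros u v Hu Huv Hv HIu HIv.
  apply (level_set_comonotone (constraint_slope J1 J2)
           (fun m => Rabs (m - ln (Nstar T0)) < e) (fun n => Rabs (n - ln (Dstar T0)) < e)
           Hincr Hdecr);
    try (apply HN || apply HD; apply Rabs_def1; lra).
  - destruct (Hopt u HIu) as [Hminu HDu], (Hopt v HIv) as [Hminv HDv].
    rewrite (constrained_min_slope_0 _ _ _ _ HDc Hminu HDu).
    rewrite (constrained_min_slope_0 _ _ _ _ HDc Hminv HDv); reflexivity.
  - rewrite !optimal_path_ln_sum by assumption.
    apply ln_increasing; [apply (in_open_interval_pos a b u Ha HIu) | assumption].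
Qed.

Lemma optimal_path_locally_increasing :
  locally_increasing_on (in_open_interval a b) (fun T => ln (Nstar T)) /\
  locally_increasing_on (in_open_interval a b) (fun T => ln (Dstar T)).
Proof.
  split; intros T0 HT0; destruct (optimal_path_locally_comonotone T0 HT0) as [d [Hd Hmono]];
    exists d; split; try exact Hd; intros u v Hu Huv Hv HIu HIv.
  - exact (proj1 (Hmono u v Hu Huv Hv HIu HIv)).
  - exact (proj2 (Hmono u v Hu Huv Hv HIu HIv)).
Qed.

End OptimalPath.

End LogCoordinates.

Theorem mainTheorem10
  (Dc : R) (J : R -> R -> R) (a b : Rbar) (Nstar Dstar : R -> R) :
  0 < Dc ->
  C2_on_pos_quadrant J ->
  Rbar_le (Finite 0) a -> Rbar_lt a b ->
  (forall T, in_open_interval a b T ->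
     is_constrained_min J Dc T (Nstar T) (Dstar T) /\
     (forall N Dt, is_constrained_min J Dc T N Dt -> N = Nstar T /\ Dt = Dstar T) /\
     2 * Dc < Dstar T) ->
  (forall T, in_open_interval a b T -> continuous Nstar T /\ continuous Dstar T) ->
  (forall T, in_open_interval a b T ->
     let mu := ln (Nstar T) in
     let nu := ln (Dstar T) in
     Derive (fun m => Derive (fun n => Jlog J m n) nu) mu <= 0 /\
     0 < Derive (fun m => Derive (fun m' => Jlog J m' nu) m) mu /\
     0 < Derive (fun n => Derive (fun n' => Jlog J mu n') n) nu) ->
  forall T1 T2, in_open_interval a b T1 -> in_open_interval a b T2 -> T1 < T2 ->
    Nstar T1 < Nstar T2 /\ Dstar T1 < Dstar T2.
Proof.
  intros HDc [J1 [J2 [J11 [J12 [J21 [J22 HC]]]]]] Ha _ Hopt Hcont Hsoc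
    T1 T2 HT1 HT2 HT12.
  assert (HC2 : C2_partials J J1 J2 J11 J12 J21 J22) by exact HC.
  assert (Hmin : forall T, in_open_interval a b T ->
            is_constrained_min J Dc T (Nstar T) (Dstar T) /\ 2 * Dc < Dstar T)
    by (intros T HT; destruct (Hopt T HT) as (Hm & _ & HDt); split; assumption).
  assert (Hsoc_log : forall T, in_open_interval a b T ->
            Jlog_nm J21 (ln (Nstar T)) (ln (Dstar T)) <= 0 /\
            0 < Jlog_mm J1 J11 (ln (Nstar T)) (ln (Dstar T)) /\
            0 < Jlog_nn J2 J22 (ln (Nstar T)) (ln (Dstar T))).
  { intros T HT; destruct (Hsoc T HT) as (Hnm & Hmm & Hnn).
    rewrite (Derive2_Jlog_nm HC2) in Hnm; rewrite (Derive2_Jlog_mm HC2) in Hmm;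
      rewrite (Derive2_Jlog_nn HC2) in Hnn.
    repeat split; assumption. }
  destruct (optimal_path_locally_increasing HC2 Dc a b Nstar Dstar HDc Ha Hmin Hcont Hsoc_log)
    as [HincrN HincrD].
  assert (Hsub : forall T, T1 <= T <= T2 -> in_open_interval a b T)
    by (intros T HT; exact (in_open_interval_between a b T1 T2 T HT1 HT2 HT)).
  destruct (Hmin T1 HT1) as [[HN1 _] HD1]; destruct (Hmin T2 HT2) as [[HN2 _] HD2].
  split; apply ln_lt_inv; try lra.
  - exact (locally_increasing_on_lt _ _ T1 T2 HincrN Hsub HT12).
  - exact (locally_increasing_on_lt _ _ T1 T2 HincrD Hsub HT12).
Qed.
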